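(* In the Markov decision process setting below, assume (H0), (H1), (H2) hold for the associated fixed-point problem. Then for any $v^0\in\mathbb{R}^M$, the iterates $(v^\ell)_{\ell\ge1}$ of policy iteration converge to the vector $v\in\mathbb{R}^M$ with components $$v_i=\sup_{P\in\mathcal{P}}\mathbb{E}\Big[\sum_{n=0}^\infty U(X^n,P)\prod_{m=0}^{n-1}D(X^m,P)\,\Big|\,X^0=i\Big],\quad 1\le i\le M.$$
   Context: MDP setting: $\rho>0$; $\mathcal{P}=\prod_i(\mathcal{W}_i\times\mathcal{Z}_i\times\mathcal{D}_i)$ with $\mathcal{D}_i$ nonempty subsets of $\{0,1\}$ and $\mathcal{W}_i,\mathcal{Z}_i$ nonempty sets of probability vectors in $\mathbb{R}^M$ (nonnegative entries summing to 1); functions $c_i:\mathcal{W}_i\to\mathbb{R}$, $k_i:\mathcal{Z}_i\to\mathbb{R}$. For $P=(w,z,\psi)\in\mathcal{P}$, $(X^n)_{n\ge0}$ is the homogeneous Markov chain on $\{1,\dots,M\}$ with $\mathbb{P}(X^{n+1}=j\mid X^n=i)=w_{ij}$ if $\psi_i=0$ and $=z_{ij}$ if $\psi_i=1$; $U(i,P)=c_i(w_i)$ if $\psi_i=0$, $=k_i(z_i)$ if $\psi_i=1$; $D(i,P)=1/(1+\rho)$ if $\psi_i=0$, $=1$ if $\psi_i=1$. Associated fixed-point problem: $[L(w)]_{ij}=w_{ij}/(1+\rho)$, $[B(z)]_{ij}=z_{ij}$, $[c(w)]_i=c_i(w_i)$, $[k(z)]_i=k_i(z_i)$, and for some $\delta>0$,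 $A(P)=(I-\Psi)(I-L(w))+\delta\Psi(I-B(z))$, $b(P)=(I-\Psi)c(w)+\delta\Psi k(z)$, $\Psi=\operatorname{diag}(\psi)$; order and suprema componentwise. Policy iteration: given $v^0$, for $\ell\ge1$ choose $P^\ell$ with $-A(P^\ell)v^{\ell-1}+b(P^\ell)=\sup_{P}\{-A(P)v^{\ell-1}+b(P)\}$ and let $v^\ell$ solve $A(P^\ell)v^\ell=b(P^\ell)$. (H0): $P\mapsto A(P)^{-1}$ is bounded on $\{P: A(P)\text{ nonsingular}\}$. (H1): (i) $A,b$ bounded on $\mathcal{P}$; (ii) for every $x$ the supremum $\sup_P\{-A(P)x+b(P)\}$ is attained by some $P_x\in\mathcal{P}$. (H2): for each $P=(w,z,\psi)$ and each $i$ with $\psi_i=1$ there is a path in the directed graph of $B(z)$ (edge $i\to j$ iff $[B(z)]_{ij}\ne0$; trivial paths allowed) from $i$ to some $j$ with $\psi_j=0$. *)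

(* classical real numbers (Reals). States are indexed 0..M-1. *)
From Stdlib Require Import Reals List Relations.
Open Scope R_scope.

Fixpoint sumR (n : nat) (f : nat -> R) : R :=
  match n with O => 0 | S n' => sumR n' f + f n' end.
Fixpoint prodR (n : nat) (f : nat -> R) : R :=
  match n with O => 1 | S n' => prodR n' f * f n' end.

(* vectors in R^M : nat -> R (entries >= M irrelevant); matrices : nat -> nat -> R *)
Definition prob_vec (M : nat) (p : nat -> R) : Prop :=
  (forall j, (j < M)%nat -> 0 <= p j) /\ sumR M p = 1.

(* a policy P = (w, z, psi); w i, z i are the rows; psi i = true means psi_i = 1 *)
Record policy := mkPolicy {
  pw : nat -> nat -> R;
  pz : nat -> nat -> R;
  ppsi : nat -> bool }.

Definition in_Pset (M : nat) (W Z : nat -> (nat -> R) -> Prop) (Dset : nat -> bool -> Prop)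
  (P : policy) : Prop :=
  forall i, (i < M)%nat -> W i (pw P i) /\ Z i (pz P i) /\ Dset i (ppsi P i).

(* transition matrix of the Markov chain X^n under P *)
Definition trans (P : policy) (i j : nat) : R :=
  if ppsi P i then pz P i j else pw P i j.
Definition Ufun (c k : nat -> (nat -> R) -> R) (P : policy) (i : nat) : R :=
  if ppsi P i then k i (pz P i) else c i (pw P i).
Definition Dfun (rho : R) (P : policy) (i : nat) : R :=
  if ppsi P i then 1 else / (1 + rho).

(* sum over all state sequences l = [x_1; ...; x_N] with x_m in {0..M-1} *)
Fixpoint path_sum (M N : nat) (F : list nat -> R) : R :=
  match N with
  | O => F nil
  | S N' => sumR M (fun j => path_sum M N' (fun l => F (j :: l)))
  end.

(* E[ sum_{n=0}^{N} U(X^n,P) prod_{m<n} D(X^m,P) | X^0 = i ], computed as the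
   sum over paths (x_0 = i, x_1, ..., x_N) of (path probability) * (payoff). *)
Definition partial_expect (M : nat) (rho : R) (c k : nat -> (nat -> R) -> R)
  (P : policy) (i N : nat) : R :=
  path_sum M N (fun l =>
    let p := i :: l in
    prodR N (fun m => trans P (nth m p O) (nth (S m) p O)) *
    sumR (S N) (fun n => Ufun c k P (nth n p O) *
                         prodR n (fun m => Dfun rho P (nth m p O)))).

(* expected infinite-horizon value: limit of the truncated expectations *)
Definition has_value (M : nat) (rho : R) (c k : nat -> (nat -> R) -> R)
  (P : policy) (i : nat) (r : R) : Prop :=
  Un_cv (fun N => partial_expect M rho c k P i N) r.

Definition Id (i j : nat) : R := if Nat.eqb i j then 1 else 0.

(* A(P) = (I - Psi)(I - L(w)) + delta Psi (I - B(z)), written row-wise *)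
Definition Amat (rho delta : R) (P : policy) (i j : nat) : R :=
  if ppsi P i then delta * (Id i j - pz P i j)
  else Id i j - pw P i j / (1 + rho).
(* b(P) = (I - Psi) c(w) + delta Psi k(z) *)
Definition bvec (delta : R) (c k : nat -> (nat -> R) -> R) (P : policy) (i : nat) : R :=
  if ppsi P i then delta * k i (pz P i) else c i (pw P i).

Definition matvec (M : nat) (A : nat -> nat -> R) (x : nat -> R) (i : nat) : R :=
  sumR M (fun j => A i j * x j).
Definition matmul (M : nat) (A B : nat -> nat -> R) (i j : nat) : R :=
  sumR M (fun l => A i l * B l j).

Definition is_inverse (M : nat) (A B : nat -> nat -> R) : Prop :=
  forall i j, (i < M)%nat -> (j < M)%nat ->
    matmul M A B i j = Id i j /\ matmul M B A i j = Id i j.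

Definition PIobj (M : nat) (rho delta : R) (c k : nat -> (nat -> R) -> R)
  (P : policy) (x : nat -> R) (i : nat) : R :=
  - matvec M (Amat rho delta P) x i + bvec delta c k P i.

Definition H0 (M : nat) (W Z : nat -> (nat -> R) -> Prop) (Dset : nat -> bool -> Prop)
  (rho delta : R) : Prop :=
  exists C, forall P B, in_Pset M W Z Dset P -> is_inverse M (Amat rho delta P) B ->
    forall i j, (i < M)%nat -> (j < M)%nat -> Rabs (B i j) <= C.

Definition H1 (M : nat) (W Z : nat -> (nat -> R) -> Prop) (Dset : nat -> bool -> Prop)
  (rho delta : R) (c k : nat -> (nat -> R) -> R) : Prop :=
  (exists C, forall P, in_Pset M W Z Dset P ->
     forall i j, (i < M)%nat -> (j < M)%nat ->
       Rabs (Amat rho delta P i j) <= C /\ Rabs (bvec delta c k P i) <= C) /\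
  (forall x : nat -> R, exists Px, in_Pset M W Z Dset Px /\
     forall i, (i < M)%nat ->
       is_lub (fun r => exists P, in_Pset M W Z Dset P /\ r = PIobj M rho delta c k P x i)
              (PIobj M rho delta c k Px x i)).

Definition Bedge (M : nat) (P : policy) (a b : nat) : Prop :=
  (a < M)%nat /\ (b < M)%nat /\ pz P a b <> 0.
Definition H2 (M : nat) (W Z : nat -> (nat -> R) -> Prop) (Dset : nat -> bool -> Prop) : Prop :=
  forall P, in_Pset M W Z Dset P -> forall i, (i < M)%nat -> ppsi P i = true ->
    exists j, (j < M)%nat /\ ppsi P j = false /\ clos_refl_trans nat (Bedge M P) i j.

(* policy iteration: (Pseq l, vseq l)_{l>=1} generated from vseq 0 = v^0 *)
Definition policy_iteration (M : nat) (W Z : nat -> (nat -> R) -> Prop)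
  (Dset : nat -> bool -> Prop) (rho delta : R) (c k : nat -> (nat -> R) -> R)
  (Pseq : nat -> policy) (vseq : nat -> nat -> R) : Prop :=
  forall l, (1 <= l)%nat ->
    in_Pset M W Z Dset (Pseq l) /\
    (forall i, (i < M)%nat ->
       is_lub (fun r => exists P, in_Pset M W Z Dset P /\
                          r = PIobj M rho delta c k P (vseq (l - 1)%nat) i)
              (PIobj M rho delta c k (Pseq l) (vseq (l - 1)%nat) i)) /\
    (forall i, (i < M)%nat ->
       matvec M (Amat rho delta (Pseq l)) (vseq l) i = bvec delta c k (Pseq l) i).

(* Each admissible policy P yields the substochastic matrix T_P = D(P) * (transition
   matrix of P).  By (H2), I - T_P is inverse-positive: at a negative minimum of a
   subsolution no step can be discounted and undiscounted steps only reach further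
   minima, so the chain of (H2) ends at a discounted state, a contradiction.  Hence
   T^N 1 -> 0, the Neumann series of T_P converges, and the expected discounted reward of
   P is the unique solution of A(P) v = b(P), as A(P) = S(P) (I - T_P) and
   b(P) = S(P) U(., P) with S(P) a positive diagonal matrix.
   The iterates v^l are the values of the policies P^l; they are nondecreasing because
   A(P^(l+1)) (v^(l+1) - v^l) is the gain of the improvement step, and bounded by (H0)
   and (H1).  Their limit v satisfies -A(P) v + b(P) <= 0 for every admissible P, so by
   inverse-positivity it dominates every value, and it is the least such bound. *)

From Stdlib Require Import Reals List Relations Lra Lia.
Open Scope R_scope.

Lemma sumR_ext n f g : (forall j, (j < n)%nat -> f j = g j) -> sumR n f = sumR n g.
Proof.
induction n as [|n IH]; intros H; simpl; [reflexivity|].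
rewrite IH by (intros; apply H; lia). rewrite H by lia. reflexivity.
Qed.

Lemma sumR_add n f g : sumR n (fun j => f j + g j) = sumR n f + sumR n g.
Proof. induction n as [|n IH]; simpl; [lra|]. rewrite IH; ring. Qed.

Lemma sumR_minus n f g : sumR n (fun j => f j - g j) = sumR n f - sumR n g.
Proof. induction n as [|n IH]; simpl; [lra|]. rewrite IH; ring. Qed.

Lemma sumR_scal n a f : sumR n (fun j => a * f j) = a * sumR n f.
Proof. induction n as [|n IH]; simpl; [lra|]. rewrite IH; ring. Qed.

Lemma sumR_scal_r n a f : sumR n (fun j => f j * a) = sumR n f * a.
Proof. induction n as [|n IH]; simpl; [lra|]. rewrite IH; ring. Qed.

Lemma sumR_zero n : sumR n (fun _ => 0) = 0.
Proof. induction n as [|n IH]; simpl; [lra|]. rewrite IH; ring. Qed.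

Lemma sumR_const n a : sumR n (fun _ => a) = INR n * a.
Proof. induction n as [|n IH]; simpl; [lra|]. rewrite IH. destruct n; simpl; ring. Qed.

Lemma sumR_le n f g : (forall j, (j < n)%nat -> f j <= g j) -> sumR n f <= sumR n g.
Proof.
induction n as [|n IH]; intros H; simpl; [lra|].
assert (sumR n f <= sumR n g) by (apply IH; intros; apply H; lia).
assert (f n <= g n) by (apply H; lia). lra.
Qed.

Lemma sumR_nonneg n f : (forall j, (j < n)%nat -> 0 <= f j) -> 0 <= sumR n f.
Proof. intros H. rewrite <- (sumR_zero n). apply sumR_le. exact H. Qed.

Lemma sumR_ge_term n f j :
  (forall j, (j < n)%nat -> 0 <= f j) -> (j < n)%nat -> f j <= sumR n f.
Proof.
induction n as [|n IH]; intros H Hj; [lia|]. simpl.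
assert (0 <= sumR n f) by (apply sumR_nonneg; intros; apply H; lia).
destruct (Nat.eq_dec j n) as [->|Hne]; [lra|].
assert (f j <= sumR n f) by (apply IH; [intros; apply H|]; lia).
assert (0 <= f n) by (apply H; lia). lra.
Qed.

Lemma sumR_abs n f : Rabs (sumR n f) <= sumR n (fun j => Rabs (f j)).
Proof.
induction n as [|n IH]; simpl; [rewrite Rabs_R0; lra|].
eapply Rle_trans; [apply Rabs_triang|]. lra.
Qed.

Lemma sumR_swap n m f :
  sumR n (fun i => sumR m (fun j => f i j)) = sumR m (fun j => sumR n (fun i => f i j)).
Proof.
induction n as [|n IH]; simpl; [symmetry; apply sumR_zero|].
rewrite IH, <- sumR_add. reflexivity.
Qed.

Lemma Id_sym i j : Id i j = Id j i.
Proof. unfold Id. rewrite Nat.eqb_sym. reflexivity. Qed.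

Lemma sumR_Id_l n i x : (i < n)%nat -> sumR n (fun j => Id i j * x j) = x i.
Proof.
induction n as [|n IH]; intros Hi; [lia|]. simpl. unfold Id at 2.
destruct (Nat.eqb_spec i n) as [->|Hne].
- rewrite (sumR_ext n _ (fun _ => 0)), sumR_zero; [ring|].
  intros j Hj. unfold Id. destruct (Nat.eqb_spec n j); [lia|ring].
- rewrite IH by lia. ring.
Qed.

Lemma sumR_Id_r n j x : (j < n)%nat -> sumR n (fun m => x m * Id m j) = x j.
Proof.
intros Hj. rewrite <- (sumR_Id_l n j x Hj).
apply sumR_ext. intros. rewrite Id_sym. ring.
Qed.

Lemma sumR_front n f : sumR (S n) f = f O + sumR n (fun j => f (S j)).
Proof.
induction n as [|n IH]; [simpl; ring|].
change (sumR (S (S n)) f) with (sumR (S n) f + f (S n)). rewrite IH. simpl. ring.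
Qed.

Lemma prodR_front n f : prodR (S n) f = f O * prodR n (fun j => f (S j)).
Proof.
induction n as [|n IH]; [simpl; ring|].
change (prodR (S (S n)) f) with (prodR (S n) f * f (S n)). rewrite IH. simpl. ring.
Qed.

Section Matvec.
Variables (M : nat) (A : nat -> nat -> R).

Lemma matvec_ext x y i :
  (forall j, (j < M)%nat -> x j = y j) -> matvec M A x i = matvec M A y i.
Proof. intros H. apply sumR_ext. intros j Hj. rewrite H by exact Hj. reflexivity. Qed.

Lemma matvec_add x y i : matvec M A (fun j => x j + y j) i = matvec M A x i + matvec M A y i.
Proof. unfold matvec. rewrite <- sumR_add. apply sumR_ext. intros; ring. Qed.

Lemma matvec_minus x y i : matvec M A (fun j => x j - y j) i = matvec M A x i - matvec M A y i.
Proof. unfold matvec. rewrite <- sumR_minus. apply sumR_ext. intros; ring. Qed.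

Lemma matvec_scal a x i : matvec M A (fun j => a * x j) i = a * matvec M A x i.
Proof. unfold matvec. rewrite <- sumR_scal. apply sumR_ext. intros; ring. Qed.

Lemma matvec_opp x i : matvec M A (fun j => - x j) i = - matvec M A x i.
Proof.
replace (- matvec M A x i) with (-1 * matvec M A x i) by ring.
rewrite <- matvec_scal. apply matvec_ext. intros; ring.
Qed.

Lemma matvec_abs_le C x i :
  (forall j, (j < M)%nat -> Rabs (A i j) <= C) ->
  Rabs (matvec M A x i) <= C * sumR M (fun j => Rabs (x j)).
Proof.
intros HC. eapply Rle_trans; [apply sumR_abs|]. rewrite <- sumR_scal.
apply sumR_le. intros j Hj. rewrite Rabs_mult.
apply Rmult_le_compat_r; [apply Rabs_pos|auto].
Qed.

Hypothesis A_nonneg : forall i j, (i < M)%nat -> (j < M)%nat -> 0 <= A i j.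

Lemma matvec_le x y i : (i < M)%nat ->
  (forall j, (j < M)%nat -> x j <= y j) -> matvec M A x i <= matvec M A y i.
Proof.
intros Hi H. apply sumR_le. intros j Hj. apply Rmult_le_compat_l; auto.
Qed.

Lemma matvec_nonneg x i : (i < M)%nat ->
  (forall j, (j < M)%nat -> 0 <= x j) -> 0 <= matvec M A x i.
Proof.
intros Hi H. apply sumR_nonneg. intros j Hj. apply Rmult_le_pos; auto.
Qed.

End Matvec.

Lemma matvec_assoc M A B x i :
  matvec M A (fun m => matvec M B x m) i = matvec M (matmul M A B) x i.
Proof.
unfold matvec, matmul.
rewrite (sumR_ext _ _ (fun m => sumR M (fun n => A i m * B m n * x n))).
- rewrite sumR_swap. apply sumR_ext. intros n _. rewrite <- sumR_scal_r.
  apply sumR_ext. intros; ring.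
- intros m _. rewrite <- sumR_scal. apply sumR_ext. intros; ring.
Qed.

Lemma matvec_Id_row M A x i : (i < M)%nat ->
  (forall l, (l < M)%nat -> A i l = Id i l) -> matvec M A x i = x i.
Proof.
intros Hi H. unfold matvec. rewrite (sumR_ext _ _ (fun j => Id i j * x j)).
- apply sumR_Id_l. exact Hi.
- intros j Hj. rewrite H by exact Hj. reflexivity.
Qed.

Lemma Un_cv_ext a b l : (forall n, a n = b n) -> Un_cv a l -> Un_cv b l.
Proof.
intros H Hc e He. destruct (Hc e He) as [N HN]. exists N. intros n Hn.
rewrite <- H. auto.
Qed.

Lemma Un_cv_const a : Un_cv (fun _ => a) a.
Proof. intros e He. exists O. intros. unfold Rdist. rewrite Rminus_diag, Rabs_R0. exact He. Qed.

Lemma Un_cv_shift u l : Un_cv u l -> Un_cv (fun n => u (S n)) l.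
Proof. intros Hc e He. destruct (Hc e He) as [N HN]. exists N. intros n Hn. apply HN. lia. Qed.

Lemma Un_cv_unshift u l : Un_cv (fun n => u (S n)) l -> Un_cv u l.
Proof.
intros Hc e He. destruct (Hc e He) as [N HN]. exists (S N). intros [|n] Hn; [lia|].
apply HN. lia.
Qed.

Lemma Un_cv_abs u l : Un_cv u l -> Un_cv (fun n => Rabs (u n)) (Rabs l).
Proof.
intros Hc e He. destruct (Hc e He) as [N HN]. exists N. intros n Hn.
specialize (HN n Hn). unfold Rdist in *.
eapply Rle_lt_trans; [apply Rabs_triang_inv2|exact HN].
Qed.

Lemma Un_cv_sumR n (f : nat -> nat -> R) l :
  (forall j, (j < n)%nat -> Un_cv (fun N => f N j) (l j)) ->
  Un_cv (fun N => sumR n (f N)) (sumR n l).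
Proof.
induction n as [|n IH]; intros H; simpl; [apply Un_cv_const|].
apply CV_plus; [apply IH; intros; apply H|apply H]; lia.
Qed.

Lemma Un_cv_matvec M A x u i :
  (forall j, (j < M)%nat -> Un_cv (fun N => x N j) (u j)) ->
  Un_cv (fun N => matvec M A (x N) i) (matvec M A u i).
Proof.
intros H. apply (Un_cv_sumR M (fun N j => A i j * x N j)). intros j Hj.
apply CV_mult; [apply Un_cv_const|auto].
Qed.

Lemma finite_choice {A} (n : nat) (Phi : nat -> A -> Prop) (a0 : A) :
  (forall j, (j < n)%nat -> exists x, Phi j x) ->
  exists F : nat -> A, forall j, (j < n)%nat -> Phi j (F j).
Proof.
induction n as [|n IH]; intros H; [exists (fun _ => a0); intros; lia|].
destruct IH as [F HF]; [intros; apply H; lia|].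
destruct (H n (Nat.lt_succ_diag_r n)) as [x Hx].
exists (fun j => if Nat.eqb j n then x else F j). intros j Hj.
destruct (Nat.eqb_spec j n); [subst; exact Hx|apply HF; lia].
Qed.

Lemma finite_eventually n (Q : nat -> nat -> Prop) :
  (forall j, (j < n)%nat -> exists N, forall m, (N <= m)%nat -> Q j m) ->
  exists N, forall j m, (j < n)%nat -> (N <= m)%nat -> Q j m.
Proof.
induction n as [|n IH]; intros H; [exists O; intros; lia|].
destruct IH as [N HN]; [intros; apply H; lia|].
destruct (H n (Nat.lt_succ_diag_r n)) as [N' HN'].
exists (Nat.max N N'). intros j m Hj Hm.
destruct (Nat.eq_dec j n); [subst; apply HN'|apply HN]; lia.
Qed.

Lemma vec_growing_cv M (x : nat -> nat -> R) (b : nat -> R) :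
  (forall N i, (i < M)%nat -> x N i <= x (S N) i) ->
  (forall N i, (i < M)%nat -> x N i <= b i) ->
  exists u, forall i, (i < M)%nat -> Un_cv (fun N => x N i) (u i).
Proof.
intros Hincr Hbd. apply (finite_choice M (fun i l => Un_cv (fun N => x N i) l) 0).
intros i Hi. destruct (growing_cv (fun N => x N i)) as [l Hl].
- intros N. apply Hincr. exact Hi.
- exists (b i). intros r [N ->]. apply Hbd. exact Hi.
- exists l. exact Hl.
Qed.

Definition substochastic (M : nat) (T : nat -> nat -> R) : Prop :=
  (forall i j, (i < M)%nat -> (j < M)%nat -> 0 <= T i j) /\
  (forall i, (i < M)%nat -> sumR M (T i) <= 1).

(* [I - T] is inverse-positive. *)
Definition comparison_principle (M : nat) (T : nat -> nat -> R) : Prop :=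
  forall x, (forall i, (i < M)%nat -> matvec M T x i <= x i) ->
  forall i, (i < M)%nat -> 0 <= x i.

Fixpoint neumann (M : nat) (T : nat -> nat -> R) (g : nat -> R) (N : nat) : nat -> R :=
  match N with
  | O => g
  | S N' => fun i => g i + matvec M T (neumann M T g N') i
  end.

Fixpoint pow_ones (M : nat) (T : nat -> nat -> R) (N : nat) : nat -> R :=
  match N with
  | O => fun _ => 1
  | S N' => matvec M T (pow_ones M T N')
  end.

Section Neumann.
Variables (M : nat) (T : nat -> nat -> R).
Hypothesis T_sub : substochastic M T.
Hypothesis T_cp : comparison_principle M T.

Let T_nonneg := proj1 T_sub.

Lemma comparison_kernel x :
  (forall i, (i < M)%nat -> matvec M T x i = x i) -> forall i, (i < M)%nat -> x i = 0.
Proof.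
intros Hx i Hi.
assert (0 <= x i) by (apply T_cp; [intros j Hj; rewrite Hx by exact Hj; lra|exact Hi]).
assert (0 <= - x i).
{ apply (T_cp (fun j => - x j)); [|exact Hi].
  intros j Hj. rewrite matvec_opp, Hx by exact Hj. lra. }
lra.
Qed.

Lemma pow_ones_bounds N i : (i < M)%nat ->
  0 <= pow_ones M T N i <= 1 /\ pow_ones M T (S N) i <= pow_ones M T N i.
Proof.
revert i. induction N as [|N IH]; intros i Hi.
- split; [simpl; lra|]. simpl. unfold matvec.
  rewrite (sumR_ext _ _ (T i)) by (intros; ring). apply (proj2 T_sub i Hi).
- assert (Hle : pow_ones M T (S (S N)) i <= pow_ones M T (S N) i).
  { apply matvec_le; auto. intros j Hj. apply IH. exact Hj. }
  assert (0 <= pow_ones M T (S N) i).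
  { apply matvec_nonneg; auto. intros j Hj. apply IH. exact Hj. }
  destruct (IH i Hi) as [[_ H1] H2]. repeat split; lra.
Qed.

(* The powers [T^N 1] decrease to a fixed point of [T], which the comparison
   principle forces to be zero. *)
Lemma pow_ones_eventually_half : exists N, forall i, (i < M)%nat -> pow_ones M T (S N) i <= / 2.
Proof.
destruct (vec_growing_cv M (fun N i => - pow_ones M T N i) (fun _ => 0)) as [L HL].
{ intros N i Hi. destruct (pow_ones_bounds N i Hi). lra. }
{ intros N i Hi. destruct (pow_ones_bounds N i Hi). lra. }
assert (Hfix : forall i, (i < M)%nat -> matvec M T (fun j => - L j) i = - L i).
{ intros i Hi. apply (UL_sequence (fun N => pow_ones M T (S N) i)).
  - apply (Un_cv_matvec M T (pow_ones M T)). intros j Hj.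
    apply (Un_cv_ext (fun N => - - pow_ones M T N j)); [intros; ring|].
    apply CV_opp, HL, Hj.
  - apply (Un_cv_shift (fun N => pow_ones M T N i)).
    apply (Un_cv_ext (fun N => - - pow_ones M T N i)); [intros; ring|].
    apply CV_opp, HL, Hi. }
assert (HL0 := comparison_kernel _ Hfix).
destruct (finite_eventually M (fun i N => pow_ones M T N i <= / 2)) as [N HN].
{ intros i Hi. destruct (HL i Hi (/ 2)) as [N HN]; [lra|].
  exists N. intros m Hm. specialize (HN m Hm). specialize (HL0 i Hi). simpl in HL0.
  unfold Rdist in HN. apply Rabs_def2 in HN. lra. }
exists N. intros i Hi. apply HN; [exact Hi|lia].
Qed.

Lemma neumann_ones_identity N i : (i < M)%nat ->
  neumann M T (fun _ => 1) N i - matvec M T (neumann M T (fun _ => 1) N) i =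
  1 - pow_ones M T (S N) i.
Proof.
revert i. induction N as [|N IH]; intros i Hi; [reflexivity|].
set (n := neumann M T (fun _ => 1) N) in *.
change (pow_ones M T (S (S N)) i) with (matvec M T (pow_ones M T (S N)) i).
change (neumann M T (fun _ => 1) (S N)) with (fun j => 1 + matvec M T n j).
rewrite (matvec_ext M T (pow_ones M T (S N)) (fun j => 1 - (n j - matvec M T n j)))
  by (intros j Hj; rewrite IH by exact Hj; ring).
rewrite matvec_add, !matvec_minus. ring.
Qed.

Lemma neumann_nonneg h N i : (i < M)%nat ->
  (forall j, (j < M)%nat -> 0 <= h j) -> 0 <= neumann M T h N i.
Proof.
intros Hi Hh. revert i Hi. induction N as [|N IH]; intros i Hi; simpl; [auto|].
assert (0 <= h i) by auto.
assert (0 <= matvec M T (neumann M T h N) i) by (apply matvec_nonneg; auto).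
lra.
Qed.

(* [y = 2 (1 + T + ... + T^N) 1], where [T^(N+1) 1 <= 1/2]. *)
Lemma strict_supersolution_exists :
  exists y, forall i, (i < M)%nat -> 0 <= y i /\ 1 + matvec M T y i <= y i.
Proof.
destruct pow_ones_eventually_half as [N HN].
exists (fun i => 2 * neumann M T (fun _ => 1) N i). intros i Hi. split.
- assert (0 <= neumann M T (fun _ => 1) N i) by (apply neumann_nonneg; [exact Hi|intros; lra]). lra.
- rewrite matvec_scal. assert (H := neumann_ones_identity N i Hi). specialize (HN i Hi). lra.
Qed.

Lemma neumann_le_supersolution h s N i : (i < M)%nat ->
  (forall j, (j < M)%nat -> 0 <= s j) ->
  (forall j, (j < M)%nat -> h j + matvec M T s j <= s j) -> neumann M T h N i <= s i.
Proof.
intros Hi Hs0 Hs. revert i Hi. induction N as [|N IH]; intros i Hi; simpl.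
- assert (0 <= matvec M T s i) by (apply matvec_nonneg; auto).
  specialize (Hs i Hi). lra.
- assert (matvec M T (neumann M T h N) i <= matvec M T s i) by (apply matvec_le; auto).
  specialize (Hs i Hi). lra.
Qed.

Lemma neumann_incr h N i : (i < M)%nat ->
  (forall j, (j < M)%nat -> 0 <= h j) -> neumann M T h N i <= neumann M T h (S N) i.
Proof.
intros Hi Hh. revert i Hi. induction N as [|N IH]; intros i Hi.
- assert (0 <= matvec M T h i) by (apply matvec_nonneg; auto). simpl. lra.
- assert (matvec M T (neumann M T h N) i <= matvec M T (neumann M T h (S N)) i)
    by (apply matvec_le; auto).
  simpl in *. lra.
Qed.

Lemma neumann_cv_nonneg h b : 0 <= b ->
  (forall j, (j < M)%nat -> 0 <= h j <= b) ->
  exists u, forall i, (i < M)%nat -> Un_cv (fun N => neumann M T h N i) (u i).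
Proof.
intros Hb Hh. destruct strict_supersolution_exists as [y Hy].
apply (vec_growing_cv M (neumann M T h) (fun i => b * y i)).
- intros N i Hi. apply neumann_incr; [exact Hi|intros; apply Hh; auto].
- intros N i Hi. apply (neumann_le_supersolution h (fun j => b * y j)); [exact Hi| |].
  + intros j Hj. apply Rmult_le_pos; [exact Hb|apply Hy, Hj].
  + intros j Hj. rewrite matvec_scal. destruct (Hy j Hj). specialize (Hh j Hj). nra.
Qed.

Lemma neumann_minus g g1 g2 N i : (forall j, g j = g1 j - g2 j) ->
  neumann M T g N i = neumann M T g1 N i - neumann M T g2 N i.
Proof.
intros Hg. revert i. induction N as [|N IH]; intros i; simpl; [apply Hg|].
rewrite (matvec_ext M T _ (fun j => neumann M T g1 N j - neumann M T g2 N j))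
  by (intros; apply IH).
rewrite matvec_minus, Hg. ring.
Qed.

Lemma neumann_cv g :
  exists u, (forall i, (i < M)%nat -> u i = g i + matvec M T u i) /\
            (forall i, (i < M)%nat -> Un_cv (fun N => neumann M T g N i) (u i)).
Proof.
set (a := sumR M (fun j => Rabs (g j))).
assert (Ha : forall j, (j < M)%nat -> Rabs (g j) <= a)
  by (intros j Hj; apply (sumR_ge_term M (fun j => Rabs (g j))); [intros; apply Rabs_pos|exact Hj]).
assert (Ha0 : 0 <= a) by (apply sumR_nonneg; intros; apply Rabs_pos).
destruct (neumann_cv_nonneg (fun j => g j + a) (2 * a)) as [u1 Hu1]; [lra| |].
{ intros j Hj. specialize (Ha j Hj). assert (H := Rle_abs (- g j)). rewrite Rabs_Ropp in H.
  assert (g j <= Rabs (g j)) by apply Rle_abs. lra. }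
destruct (neumann_cv_nonneg (fun _ => a) a) as [u2 Hu2]; [exact Ha0|intros; lra|].
assert (Hcv : forall i, (i < M)%nat -> Un_cv (fun N => neumann M T g N i) (u1 i - u2 i)).
{ intros i Hi.
  apply (Un_cv_ext (fun N => neumann M T (fun j => g j + a) N i - neumann M T (fun _ => a) N i)).
  - intros N. symmetry. apply neumann_minus. intros; ring.
  - apply CV_minus; auto. }
exists (fun i => u1 i - u2 i). split; [|exact Hcv].
intros i Hi. apply (UL_sequence (fun N => neumann M T g (S N) i)).
- apply (Un_cv_shift (fun N => neumann M T g N i)), Hcv, Hi.
- apply CV_plus; [apply Un_cv_const|]. apply Un_cv_matvec. exact Hcv.
Qed.

End Neumann.

Definition disc_trans (rho : R) (P : policy) (i j : nat) : R := Dfun rho P i * trans P i j.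

Definition stochastic_rows (M : nat) (P : policy) : Prop :=
  forall i, (i < M)%nat -> prob_vec M (trans P i).

Definition chained (M : nat) (P : policy) : Prop :=
  forall i, (i < M)%nat -> ppsi P i = true ->
  exists j, (j < M)%nat /\ ppsi P j = false /\ clos_refl_trans nat (Bedge M P) i j.

Lemma path_sum_ext M N F G : (forall l, F l = G l) -> path_sum M N F = path_sum M N G.
Proof.
revert F G. induction N as [|N IH]; intros F G H; simpl; [apply H|].
apply sumR_ext. intros j _. apply IH. auto.
Qed.

Lemma path_sum_add M N F G :
  path_sum M N (fun l => F l + G l) = path_sum M N F + path_sum M N G.
Proof.
revert F G. induction N as [|N IH]; intros F G; simpl; [reflexivity|].
rewrite <- sumR_add. apply sumR_ext. intros j _.
apply (IH (fun l => F (j :: l)) (fun l => G (j :: l))).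
Qed.

Lemma path_sum_scal M N a F : path_sum M N (fun l => a * F l) = a * path_sum M N F.
Proof.
revert F. induction N as [|N IH]; intros F; simpl; [reflexivity|].
rewrite <- sumR_scal. apply sumR_ext. intros j _. apply (IH (fun l => F (j :: l))).
Qed.

Section MarkovChain.
Variables (M : nat) (rho : R) (c k : nat -> (nat -> R) -> R) (P : policy).
Hypothesis rows : stochastic_rows M P.

Let path_prob N (p : list nat) : R :=
  prodR N (fun m => trans P (nth m p O) (nth (S m) p O)).
Let path_payoff N (p : list nat) : R :=
  sumR (S N) (fun n => Ufun c k P (nth n p O) * prodR n (fun m => Dfun rho P (nth m p O))).

Lemma path_prob_cons N i p :
  path_prob (S N) (i :: p) = trans P i (nth O p O) * path_prob N p.
Proof. apply prodR_front. Qed.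

Lemma path_payoff_cons N i p :
  path_payoff (S N) (i :: p) = Ufun c k P i + Dfun rho P i * path_payoff N p.
Proof.
unfold path_payoff. rewrite sumR_front, <- sumR_scal. simpl nth at 1. f_equal; [simpl; ring|].
apply sumR_ext. intros n _. rewrite prodR_front. simpl. ring.
Qed.

Lemma path_prob_total N j : (j < M)%nat -> path_sum M N (fun l => path_prob N (j :: l)) = 1.
Proof.
revert j. induction N as [|N IH]; intros j Hj; [reflexivity|].
simpl path_sum. rewrite <- (proj2 (rows j Hj)). apply sumR_ext. intros j' Hj'.
rewrite (path_sum_ext _ _ _ (fun l => trans P j j' * path_prob N (j' :: l)))
  by (intros l; apply (path_prob_cons N j (j' :: l))).
rewrite path_sum_scal, IH by exact Hj'. ring.
Qed.

Lemma partial_expect_S i N : (i < M)%nat ->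
  partial_expect M rho c k P i (S N) =
  Ufun c k P i + matvec M (disc_trans rho P) (fun j => partial_expect M rho c k P j N) i.
Proof.
intros Hi. change (partial_expect M rho c k P i (S N))
  with (path_sum M (S N) (fun l => path_prob (S N) (i :: l) * path_payoff (S N) (i :: l))).
simpl path_sum.
rewrite (sumR_ext _ _ (fun j => Ufun c k P i * trans P i j +
                               disc_trans rho P i j * partial_expect M rho c k P j N)).
- rewrite sumR_add, sumR_scal, (proj2 (rows i Hi)). unfold matvec. ring.
- intros j Hj.
  rewrite (path_sum_ext _ _ _ (fun l => Ufun c k P i * trans P i j * path_prob N (j :: l)
             + disc_trans rho P i j * (path_prob N (j :: l) * path_payoff N (j :: l)))).
  + rewrite path_sum_add, !path_sum_scal, path_prob_total by exact Hj.
    unfold partial_expect, path_prob, path_payoff. ring.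
  + intros l. rewrite (path_prob_cons N i (j :: l)), (path_payoff_cons N i (j :: l)).
    unfold disc_trans. simpl nth at 1. ring.
Qed.

Lemma partial_expect_neumann N i : (i < M)%nat ->
  partial_expect M rho c k P i N = neumann M (disc_trans rho P) (Ufun c k P) N i.
Proof.
revert i. induction N as [|N IH]; intros i Hi.
- unfold partial_expect. simpl. ring.
- rewrite partial_expect_S by exact Hi. simpl. f_equal. apply matvec_ext. exact IH.
Qed.

End MarkovChain.

Lemma argmin_exists (x : nat -> R) n : (0 < n)%nat ->
  exists i0, (i0 < n)%nat /\ forall j, (j < n)%nat -> x i0 <= x j.
Proof.
induction n as [|n IH]; intros Hn; [lia|].
destruct (Nat.eq_dec n O) as [->|Hn0].
{ exists O. split; [lia|]. intros j Hj. replace j with O by lia. lra. }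
destruct IH as [i0 [Hi0 Hmin]]; [lia|].
destruct (Rle_dec (x i0) (x n)).
- exists i0. split; [lia|]. intros j Hj.
  destruct (Nat.eq_dec j n); [subst; assumption|apply Hmin; lia].
- exists n. split; [lia|]. intros j Hj.
  destruct (Nat.eq_dec j n); [subst; lra|]. specialize (Hmin j ltac:(lia)). lra.
Qed.

Lemma Dfun_bounds rho P i : 0 < rho -> 0 < Dfun rho P i <= 1.
Proof.
intros Hrho. unfold Dfun. destruct (ppsi P i); [lra|].
split; [apply Rinv_0_lt_compat; lra|].
rewrite <- Rinv_1. apply Rinv_le_contravar; lra.
Qed.

Section Chain.
Variables (M : nat) (rho : R) (P : policy).
Hypothesis rho_pos : 0 < rho.
Hypothesis rows : stochastic_rows M P.

Lemma disc_trans_substochastic : substochastic M (disc_trans rho P).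
Proof.
split.
- intros i j Hi Hj. apply Rmult_le_pos.
  + apply Rlt_le, Dfun_bounds, rho_pos.
  + apply (proj1 (rows i Hi)), Hj.
- intros i Hi. unfold disc_trans. rewrite sumR_scal.
  change (sumR M (fun j => trans P i j)) with (sumR M (trans P i)).
  rewrite (proj2 (rows i Hi)). destruct (Dfun_bounds rho P i rho_pos). lra.
Qed.

Lemma negative_minimum_spreads x a :
  (forall i, (i < M)%nat -> matvec M (disc_trans rho P) x i <= x i) ->
  (forall j, (j < M)%nat -> x a <= x j) -> x a < 0 -> (a < M)%nat ->
  ppsi P a = true /\ forall b, Bedge M P a b -> x b = x a.
Proof.
intros Hsub Hmin Hneg Ha.
set (m := x a) in *.
destruct (rows a Ha) as [Hnn Hsum].
assert (Hexcess : forall j, (j < M)%nat -> 0 <= trans P a j * (x j - m))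
  by (intros j Hj; apply Rmult_le_pos; [apply Hnn, Hj|specialize (Hmin j Hj); lra]).
assert (Hsplit : matvec M (disc_trans rho P) x a =
                 Dfun rho P a * (m + sumR M (fun j => trans P a j * (x j - m)))).
{ unfold matvec, disc_trans.
  rewrite (sumR_ext _ _ (fun j => Dfun rho P a * (m * trans P a j + trans P a j * (x j - m))))
    by (intros; ring).
  rewrite sumR_scal, sumR_add, sumR_scal.
  change (sumR M (fun j => trans P a j)) with (sumR M (trans P a)). rewrite Hsum. ring. }
assert (Hexcess_sum := sumR_nonneg _ _ Hexcess).
specialize (Hsub a Ha). rewrite Hsplit in Hsub. fold m in Hsub.
destruct (ppsi P a) eqn:Hpsi.
- unfold Dfun in Hsub. rewrite Hpsi in Hsub. split; [reflexivity|].
  intros b [_ [Hb Hz]].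
  assert (Hterm : trans P a b * (x b - m) = 0).
  { assert (H := sumR_ge_term _ _ _ Hexcess Hb). cbv beta in H. specialize (Hexcess b Hb). lra. }
  unfold trans in Hterm. rewrite Hpsi in Hterm.
  apply Rmult_integral in Hterm. destruct Hterm; [contradiction|lra].
- exfalso. unfold Dfun in Hsub. rewrite Hpsi in Hsub.
  assert (0 < / (1 + rho) < 1).
  { split; [apply Rinv_0_lt_compat; lra|].
    rewrite <- Rinv_1. apply Rinv_lt_contravar; lra. }
  nra.
Qed.

Hypothesis chain : chained M P.

Lemma disc_trans_comparison : comparison_principle M (disc_trans rho P).
Proof.
intros x Hsub i Hi.
destruct (argmin_exists x M) as [a [Ha Hmin]]; [lia|].
destruct (Rle_dec 0 (x a)) as [Hpos|Hneg]; [specialize (Hmin i Hi); lra|].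
assert (Hreach : forall u v, clos_refl_trans nat (Bedge M P) u v -> x u = x a -> x v = x a).
{ intros u v Huv. induction Huv as [u v Hedge|u|u v w _ IH1 _ IH2]; intros Hu.
  - rewrite <- Hu. apply (negative_minimum_spreads x u Hsub); [| |apply Hedge|exact Hedge].
    + intros j Hj. rewrite Hu. apply Hmin, Hj.
    + lra.
  - exact Hu.
  - apply IH2, IH1, Hu. }
destruct (negative_minimum_spreads x a Hsub Hmin ltac:(lra) Ha) as [Hpsi _].
destruct (chain a Ha Hpsi) as [j [Hj [Hpsij Hpath]]].
assert (Hxj : x j = x a) by (apply (Hreach a j Hpath); reflexivity).
assert (Hminj : forall l, (l < M)%nat -> x j <= x l) by (intros; rewrite Hxj; auto).
destruct (negative_minimum_spreads x j Hsub Hminj ltac:(lra) Hj) as [Hpsij' _].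
congruence.
Qed.

End Chain.

(* The diagonal [S(P)] of [A(P) = S(P) (I - T_P)] and [b(P) = S(P) U(., P)]. *)
Definition row_scale (delta : R) (P : policy) (i : nat) : R := if ppsi P i then delta else 1.

Lemma Amat_factor M rho delta P x i : (i < M)%nat ->
  matvec M (Amat rho delta P) x i =
  row_scale delta P i * (x i - matvec M (disc_trans rho P) x i).
Proof.
intros Hi. unfold matvec, Amat, disc_trans, row_scale, Dfun, trans.
destruct (ppsi P i).
- rewrite (sumR_ext _ _ (fun j => delta * (Id i j * x j - 1 * pz P i j * x j))) by (intros; ring).
  rewrite sumR_scal, sumR_minus, sumR_Id_l by exact Hi. reflexivity.
- rewrite (sumR_ext _ _ (fun j => 1 * (Id i j * x j - / (1 + rho) * pw P i j * x j)))
    by (intros; unfold Rdiv; ring).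
  rewrite sumR_scal, sumR_minus, sumR_Id_l by exact Hi. reflexivity.
Qed.

Lemma bvec_factor delta c k P i : bvec delta c k P i = row_scale delta P i * Ufun c k P i.
Proof. unfold bvec, row_scale, Ufun. destruct (ppsi P i); ring. Qed.

Lemma row_scale_pos delta P i : 0 < delta -> 0 < row_scale delta P i.
Proof. unfold row_scale. destruct (ppsi P i); lra. Qed.

Section PolicyEvaluation.
Variables (M : nat) (rho delta : R) (c k : nat -> (nat -> R) -> R) (P : policy).
Hypotheses (rho_pos : 0 < rho) (delta_pos : 0 < delta).
Hypotheses (rows : stochastic_rows M P) (chain : chained M P).

Let T_sub := disc_trans_substochastic M rho P rho_pos rows.
Let T_cp := disc_trans_comparison M rho P rho_pos rows chain.

Lemma Amat_monotone x :
  (forall i, (i < M)%nat -> 0 <= matvec M (Amat rho delta P) x i) ->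
  forall i, (i < M)%nat -> 0 <= x i.
Proof.
intros H. apply T_cp. intros i Hi. specialize (H i Hi).
rewrite Amat_factor in H by exact Hi.
assert (Hs := row_scale_pos delta P i delta_pos).
apply Rmult_le_reg_l with (row_scale delta P i); [exact Hs|]. lra.
Qed.

Lemma Amat_solution_unique x y :
  (forall i, (i < M)%nat -> matvec M (Amat rho delta P) x i = matvec M (Amat rho delta P) y i) ->
  forall i, (i < M)%nat -> x i = y i.
Proof.
intros Hxy i Hi.
enough (x i - y i = 0) by lra.
apply (comparison_kernel M (disc_trans rho P) T_cp (fun j => x j - y j)); [|exact Hi].
intros j Hj. specialize (Hxy j Hj). 
rewrite !Amat_factor in Hxy by exact Hj. rewrite matvec_minus.
assert (Hs := row_scale_pos delta P j delta_pos).
apply Rmult_eq_reg_l with (row_scale delta P j); [|lra]. lra.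
Qed.

Lemma value_solves_Amat :
  exists u, (forall i, (i < M)%nat -> matvec M (Amat rho delta P) u i = bvec delta c k P i) /\
            (forall i, (i < M)%nat -> has_value M rho c k P i (u i)).
Proof.
destruct (neumann_cv M (disc_trans rho P) T_sub T_cp (Ufun c k P)) as [u [Hfix Hcv]].
exists u. split.
- intros i Hi. rewrite Amat_factor, bvec_factor by exact Hi.
  rewrite (Hfix i Hi) at 1. ring.
- intros i Hi. apply (Un_cv_ext (fun N => neumann M (disc_trans rho P) (Ufun c k P) N i)).
  + intros N. symmetry. apply partial_expect_neumann; assumption.
  + apply Hcv, Hi.
Qed.

Lemma solution_is_value x :
  (forall i, (i < M)%nat -> matvec M (Amat rho delta P) x i = bvec delta c k P i) ->
  forall i, (i < M)%nat -> has_value M rho c k P i (x i).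
Proof.
intros Hx i Hi. destruct value_solves_Amat as [u [Hu Hval]].
rewrite (Amat_solution_unique x u)
  by (exact Hi || (intros j Hj; rewrite Hx, Hu by exact Hj; reflexivity)).
apply Hval, Hi.
Qed.

Lemma Amat_invertible : exists B, is_inverse M (Amat rho delta P) B.
Proof.
destruct (finite_choice M
            (fun j col => forall l, (l < M)%nat -> matvec M (Amat rho delta P) col l = Id l j)
            (fun _ => 0)) as [C HC].
{ intros j Hj.
  destruct (neumann_cv M (disc_trans rho P) T_sub T_cp (fun l => Id l j / row_scale delta P l))
    as [u [Hfix _]].
  exists u. intros l Hl. rewrite Amat_factor by exact Hl. rewrite (Hfix l Hl) at 1.
  assert (Hs := row_scale_pos delta P l delta_pos). field. lra. }
exists (fun i j => C j i). intros i j Hi Hj. split; [apply HC; assumption|].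
set (x := fun m => matmul M (fun i j => C j i) (Amat rho delta P) m j).
enough (Hx : forall m, (m < M)%nat -> x m = Id m j) by (apply Hx, Hi).
apply Amat_solution_unique. intros l Hl. unfold x.
rewrite (matvec_ext M (Amat rho delta P) _
           (fun m => matvec M (fun i j => C j i) (fun n => Amat rho delta P n j) m))
  by reflexivity.
rewrite matvec_assoc, matvec_Id_row by (exact Hl || (intros l' Hl'; apply HC; assumption)).
unfold matvec. rewrite sumR_Id_r by exact Hj. reflexivity.
Qed.

End PolicyEvaluation.

Section PolicyIteration.
Variables (M : nat) (rho delta : R) (W Z : nat -> (nat -> R) -> Prop)
  (Dset : nat -> bool -> Prop) (c k : nat -> (nat -> R) -> R).
Hypotheses (rho_pos : 0 < rho) (delta_pos : 0 < delta).
Hypothesis admissible_regular :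
  forall P, in_Pset M W Z Dset P -> stochastic_rows M P /\ chained M P.
Variables (CA Cinv : R).
Hypothesis data_bounded : forall P, in_Pset M W Z Dset P ->
  forall i j, (i < M)%nat -> (j < M)%nat ->
  Rabs (Amat rho delta P i j) <= CA /\ Rabs (bvec delta c k P i) <= CA.
Hypothesis inverse_bounded : forall P B, in_Pset M W Z Dset P ->
  is_inverse M (Amat rho delta P) B ->
  forall i j, (i < M)%nat -> (j < M)%nat -> Rabs (B i j) <= Cinv.
Variables (Pseq : nat -> policy) (vseq : nat -> nat -> R).
Hypothesis iteration : policy_iteration M W Z Dset rho delta c k Pseq vseq.

Lemma solution_bounded P x : in_Pset M W Z Dset P ->
  (forall i, (i < M)%nat -> matvec M (Amat rho delta P) x i = bvec delta c k P i) ->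
  forall i, (i < M)%nat -> Rabs (x i) <= INR M * (Cinv * CA).
Proof.
intros HP Hx i Hi. destruct (admissible_regular P HP) as [rows chain].
destruct (Amat_invertible M rho delta P rho_pos delta_pos rows chain) as [B HB].
set (y := matvec M B (bvec delta c k P)).
assert (Hy : forall l, (l < M)%nat -> matvec M (Amat rho delta P) y l = bvec delta c k P l).
{ intros l Hl. unfold y. rewrite matvec_assoc.
  apply matvec_Id_row; [exact Hl|]. intros l' Hl'. apply HB; assumption. }
rewrite (Amat_solution_unique M rho delta P rho_pos delta_pos rows chain x y)
  by (exact Hi || (intros l Hl; rewrite Hx, Hy by exact Hl; reflexivity)).
unfold y, matvec. eapply Rle_trans; [apply sumR_abs|].
rewrite <- sumR_const. apply sumR_le. intros j Hj. rewrite Rabs_mult.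
apply Rmult_le_compat; try apply Rabs_pos.
- apply (inverse_bounded P B HP HB); assumption.
- apply (data_bounded P HP j j Hj Hj).
Qed.

Lemma iteration_step n :
  in_Pset M W Z Dset (Pseq (S n)) /\
  (forall P i, in_Pset M W Z Dset P -> (i < M)%nat ->
     PIobj M rho delta c k P (vseq n) i <= PIobj M rho delta c k (Pseq (S n)) (vseq n) i) /\
  (forall i, (i < M)%nat ->
     matvec M (Amat rho delta (Pseq (S n))) (vseq (S n)) i = bvec delta c k (Pseq (S n)) i).
Proof.
destruct (iteration (S n)) as [HP [Hlub Hsol]]; [lia|].
replace (S n - 1)%nat with n in Hlub by lia.
split; [exact HP|split; [|exact Hsol]].
intros P i HPadm Hi. apply (proj1 (Hlub i Hi)). exists P. split; [exact HPadm|reflexivity].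
Qed.

Lemma improvement_eq n i : (i < M)%nat ->
  PIobj M rho delta c k (Pseq (S (S n))) (vseq (S n)) i =
  matvec M (Amat rho delta (Pseq (S (S n)))) (fun j => vseq (S (S n)) j - vseq (S n) j) i.
Proof.
intros Hi. destruct (iteration_step (S n)) as [_ [_ Hsol]].
rewrite matvec_minus, Hsol by exact Hi. unfold PIobj. ring.
Qed.

Lemma iteration_monotone n i : (i < M)%nat -> vseq (S n) i <= vseq (S (S n)) i.
Proof.
intros Hi. destruct (iteration_step n) as [HP1 [_ Hsol1]].
destruct (iteration_step (S n)) as [HP2 [Hsup2 _]].
destruct (admissible_regular _ HP2) as [rows chain].
enough (0 <= vseq (S (S n)) i - vseq (S n) i) by lra.
apply (Amat_monotone M rho delta (Pseq (S (S n))) rho_pos delta_pos rows chain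
         (fun j => vseq (S (S n)) j - vseq (S n) j)); [|exact Hi].
intros l Hl. rewrite <- improvement_eq by exact Hl.
eapply Rle_trans; [|apply (Hsup2 (Pseq (S n)) l HP1 Hl)].
unfold PIobj. rewrite Hsol1 by exact Hl. lra.
Qed.

Lemma iteration_cv : exists v, forall i, (i < M)%nat -> Un_cv (fun n => vseq (S n) i) (v i).
Proof.
apply (vec_growing_cv M (fun n => vseq (S n)) (fun _ => INR M * (Cinv * CA))).
- intros n i Hi. apply iteration_monotone, Hi.
- intros n i Hi. destruct (iteration_step n) as [HP [_ Hsol]].
  eapply Rle_trans; [apply Rle_abs|]. apply (solution_bounded (Pseq (S n))); assumption.
Qed.

Lemma limit_supersolution v :
  (forall i, (i < M)%nat -> Un_cv (fun n => vseq (S n) i) (v i)) ->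
  forall P i, in_Pset M W Z Dset P -> (i < M)%nat -> PIobj M rho delta c k P v i <= 0.
Proof.
intros Hv P i HP Hi.
replace 0 with (CA * sumR M (fun j => Rabs (v j - v j)))
  by (rewrite (sumR_ext _ _ (fun _ => 0)), sumR_zero;
      [ring|intros; rewrite Rminus_diag, Rabs_R0; reflexivity]).
apply (@Rle_cv_lim (fun n => PIobj M rho delta c k P (vseq (S n)) i)
                   (fun n => CA * sumR M (fun j => Rabs (vseq (S (S n)) j - vseq (S n) j)))).
- intros n. destruct (iteration_step (S n)) as [HP2 [Hsup _]].
  eapply Rle_trans; [apply (Hsup P i HP Hi)|].
  rewrite improvement_eq by exact Hi.
  eapply Rle_trans; [apply Rle_abs|]. apply matvec_abs_le.
  intros j Hj. apply (data_bounded _ HP2 i j Hi Hj).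
- unfold PIobj. apply CV_plus; [|apply Un_cv_const].
  apply (Un_cv_ext (opp_seq (fun n => matvec M (Amat rho delta P) (vseq (S n)) i)));
    [reflexivity|].
  apply CV_opp, Un_cv_matvec, Hv.
- apply CV_mult; [apply Un_cv_const|]. apply Un_cv_sumR. intros j Hj.
  apply Un_cv_abs, CV_minus; [apply (Un_cv_shift (fun n => vseq (S n) j))|]; apply Hv, Hj.
Qed.

Lemma supersolution_dominates_values v P i r :
  (forall P i, in_Pset M W Z Dset P -> (i < M)%nat -> PIobj M rho delta c k P v i <= 0) ->
  in_Pset M W Z Dset P -> (i < M)%nat -> has_value M rho c k P i r -> r <= v i.
Proof.
intros Hsuper HP Hi Hr. destruct (admissible_regular P HP) as [rows chain].
destruct (value_solves_Amat M rho delta c k P rho_pos rows chain) as [u [Hu Hval]].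
rewrite (UL_sequence _ _ _ Hr (Hval i Hi)).
enough (0 <= v i - u i) by lra.
apply (Amat_monotone M rho delta P rho_pos delta_pos rows chain (fun j => v j - u j)); [|exact Hi].
intros l Hl. rewrite matvec_minus, Hu by exact Hl.
specialize (Hsuper P l HP Hl). unfold PIobj in Hsuper. lra.
Qed.

Lemma iterates_are_values n i : (i < M)%nat ->
  has_value M rho c k (Pseq (S n)) i (vseq (S n) i).
Proof.
intros Hi. destruct (iteration_step n) as [HP [_ Hsol]].
destruct (admissible_regular _ HP) as [rows chain].
apply (solution_is_value M rho delta c k (Pseq (S n)) rho_pos delta_pos rows chain); assumption.
Qed.

Lemma policy_iteration_converges :
  exists v, forall i, (i < M)%nat ->
    is_lub (fun r => exists P, in_Pset M W Z Dset P /\ has_value M rho c k P i r) (v i) /\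
    Un_cv (fun l => vseq l i) (v i).
Proof.
destruct iteration_cv as [v Hv]. exists v. intros i Hi. split; [split|].
- intros r [P [HP Hr]].
  apply (supersolution_dominates_values v P i r); [|assumption..].
  apply limit_supersolution, Hv.
- intros ub Hub.
  apply (@Rle_cv_lim (fun n => vseq (S n) i) (fun _ => ub)); [|apply Hv, Hi|apply Un_cv_const].
  intros n. apply Hub. exists (Pseq (S n)).
  split; [apply iteration_step|apply iterates_are_values, Hi].
- apply Un_cv_unshift, Hv, Hi.
Qed.

End PolicyIteration.

Theorem corollary4p4 (M : nat) (rho delta : R)
  (W Z : nat -> (nat -> R) -> Prop) (Dset : nat -> bool -> Prop)
  (c k : nat -> (nat -> R) -> R)
  (Hrho : 0 < rho) (Hdelta : 0 < delta)
  (HW : forall i, (i < M)%nat -> (exists p, W i p) /\ forall p, W i p -> prob_vec M p)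
  (HZ : forall i, (i < M)%nat -> (exists p, Z i p) /\ forall p, Z i p -> prob_vec M p)
  (HD : forall i, (i < M)%nat -> exists d, Dset i d)
  (H0h : H0 M W Z Dset rho delta)
  (H1h : H1 M W Z Dset rho delta c k)
  (H2h : H2 M W Z Dset)
  (Pseq : nat -> policy) (vseq : nat -> nat -> R)
  (HPI : policy_iteration M W Z Dset rho delta c k Pseq vseq) :
  (forall P, in_Pset M W Z Dset P -> forall i, (i < M)%nat ->
     exists r, has_value M rho c k P i r) /\
  exists v : nat -> R,
    forall i, (i < M)%nat ->
      is_lub (fun r => exists P, in_Pset M W Z Dset P /\ has_value M rho c k P i r) (v i) /\
      Un_cv (fun l => vseq l i) (v i).
Proof.
assert (Hreg : forall P, in_Pset M W Z Dset P -> stochastic_rows M P /\ chained M P).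
{ intros P HP. split; [|exact (H2h P HP)]. intros i Hi.
  destruct (HP i Hi) as [Hw [Hz _]]. unfold trans. destruct (ppsi P i).
  - apply (proj2 (HZ i Hi)), Hz.
  - apply (proj2 (HW i Hi)), Hw. }
destruct H0h as [Cinv HCinv]. destruct H1h as [[CA HCA] _].
split.
{ intros P HP i Hi. destruct (Hreg P HP) as [rows chain].
  destruct (value_solves_Amat M rho delta c k P Hrho rows chain) as [u [_ Hval]].
  exists (u i). apply Hval, Hi. }
exact (policy_iteration_converges M rho delta W Z Dset c k Hrho Hdelta Hreg CA Cinv HCA HCinv
         Pseq vseq HPI).
Qed.
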